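(* Consider the system $$\dot x=-y+x(x^3+xy^2)+\sum_{k=1}^2\varepsilon^k\Big(\lambda_kx+\sum_{i+j=4}a_{k,i,j}x^iy^j\Big),\qquad \dot y=x+y(x^3+xy^2)+\sum_{k=1}^2\varepsilon^k\Big(\lambda_ky+\sum_{i+j=4}b_{k,i,j}x^iy^j\Big)$$ with real coefficients. For $|\varepsilon|>0$ sufficiently small: (1) the first order averaging method yields at most three limit cycles bifurcating from the periodic orbits of the unperturbed system (the center at the origin of $\dot x=-y+x(x^3+xy^2)$, $\dot y=x+y(x^3+xy^2)$), and three is reached; (2) under the conditions $a_{1,1,3}=b_{1,0,4}$, $a_{1,3,1}=b_{1,2,2}$, $b_{1,4,0}=\lambda_1=0$ (so that $f_1\equiv0$) together with $a_{1,2,2}=b_{1,1,3}$, $a_{1,4,0}=b_{1,3,1}$, $a_{1,0,4}=0$, the second order averaging method yields at most three limit cycles, and three is reached. More precisely, under these conditions, with $z=\big[\frac{1-s^2}{3(1+s^2)}\big]^{1/3}$, $s\in(0,1)$, the second order averaged function equals $$\frac{\pi\,3^{2/3}(1-s)^{1/3}}{108(1+s)^{11/3}(1+s^2)^{4/3}}\big(H_1s^6+H_2s^5+H_3s^4+H_4s^3+H_3s^2+H_2s+H_1\big),$$ where $H_1=3a_{2,1,3}+a_{2,3,1}-3b_{2,0,4}-b_{2,2,2}-3b_{2,4,0}+72\lambda_2$, $H_2=-4a_{2,1,3}+4b_{2,0,4}+4a_{2,3,1}-4b_{2,2,2}-12b_{2,4,0}+288\lambda_2$, $H_3=5a_{2,1,3}-9a_{2,3,1}-5b_{2,0,4}+9b_{2,2,2}-5b_{2,4,0}+504\lambda_2$,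 $H_4=-8a_{2,1,3}+8a_{2,3,1}+8b_{2,0,4}-8b_{2,2,2}+40b_{2,4,0}+576\lambda_2$.
   Context: Averaging framework. In polar coordinates $x=r\cos\theta$, $y=r\sin\theta$ expand $dr/d\theta=F_0(\theta,r)+\varepsilon F_1(\theta,r)+\varepsilon^2F_2(\theta,r)+O(\varepsilon^3)$; here $F_0=r^4\cos\theta$. Let $r(\theta,z)=z(1-3z^3\sin\theta)^{-1/3}$ (solution of $dr/d\theta=F_0$, $r(0)=z$, $2\pi$-periodic and positive for $z\in D=(0,3^{-1/3})$) and $Y(\theta,z)=(1-3z^3\sin\theta)^{-4/3}$ (solution of $Y'=\partial_rF_0(\theta,r(\theta,z))Y$, $Y(0)=1$). Define $y_1(\theta,z)=Y(\theta,z)\int_0^\theta Y^{-1}F_1\,ds$ and $y_2(\theta,z)=Y(\theta,z)\int_0^\theta Y^{-1}\big(2F_2+\partial_r^2F_0\,y_1^2+2\partial_rF_1\,y_1\big)ds$, with $F_j$ evaluated at $(s,r(s,z))$. The averaged functions are $f_1(z)=y_1(2\pi,z)$, $f_2(z)=y_2(2\pi,z)/2$. By the averaging theorem, if $f_1\equiv\dots\equiv f_{j-1}\equiv0$ and $z^*\in D$ is a simple zero of $f_j$, then for $|\varepsilon|$ small the system has a limit cycle tending to the periodic orbit through $(z^*,0)$. ''The $j$-th order averaging method yields at most $n$ limit cycles, and $n$ is reached'' means that over all admissible coefficient choices with $f_1\equiv\dots\equiv f_{j-1}\equiv 0$, $f_j\not\equiv0$, the function $f_j$ has at most $n$ simple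 zeros in $D$, and some choice gives exactly $n$. *)

From Stdlib Require Import Reals Lra List.
From Coquelicot Require Import Coquelicot.
Open Scope R_scope.

(* Coefficients of the perturbation.
   lam k      = lambda_k
   ca k i j   = a_{k,i,j}
   cb k i j   = b_{k,i,j}
   Only k in {1,2} and i+j = 4 are ever used. *)
Record coeffs := mkCoeffs {
  lam : nat -> R;
  ca  : nat -> nat -> nat -> R;
  cb  : nat -> nat -> nat -> R }.

Definition quartic (c : nat -> nat -> R) (x y : R) : R :=
  sum_f_R0 (fun i => c i (4 - i)%nat * x ^ i * y ^ (4 - i)) 4.

Definition Pk (C : coeffs) (k : nat) (x y : R) : R :=
  lam C k * x + quartic (ca C k) x y.
Definition Qk (C : coeffs) (k : nat) (x y : R) : R :=
  lam C k * y + quartic (cb C k) x y.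

Definition xdot (C : coeffs) (eps x y : R) : R :=
  - y + x * (x ^ 3 + x * y ^ 2) + (eps * Pk C 1 x y + eps ^ 2 * Pk C 2 x y).
Definition ydot (C : coeffs) (eps x y : R) : R :=
  x + y * (x ^ 3 + x * y ^ 2) + (eps * Qk C 1 x y + eps ^ 2 * Qk C 2 x y).

Definition drdth (C : coeffs) (th r eps : R) : R :=
  let x := r * cos th in
  let y := r * sin th in
  ((x * xdot C eps x y + y * ydot C eps x y) / r)
  / ((x * ydot C eps x y - y * xdot C eps x y) / r ^ 2).

Definition Fk (C : coeffs) (k : nat) (th r : R) : R :=
  Derive_n (fun e => drdth C th r e) k 0 / INR (Factorial.fact k).

Definition rsol (th z : R) : R := z * Rpower (1 - 3 * z ^ 3 * sin th) (- (1/3)).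
Definition Ysol (th z : R) : R := Rpower (1 - 3 * z ^ 3 * sin th) (- (4/3)).

Definition y1 (C : coeffs) (th z : R) : R :=
  Ysol th z * RInt (fun s => / Ysol s z * Fk C 1 s (rsol s z)) 0 th.

Definition y2 (C : coeffs) (th z : R) : R :=
  Ysol th z * RInt (fun s => / Ysol s z *
     (2 * Fk C 2 s (rsol s z)
      + Derive_n (fun r => Fk C 0 s r) 2 (rsol s z) * (y1 C s z) ^ 2
      + 2 * Derive (fun r => Fk C 1 s r) (rsol s z) * y1 C s z)) 0 th.

Definition f1 (C : coeffs) (z : R) : R := y1 C (2 * PI) z.
Definition f2 (C : coeffs) (z : R) : R := y2 C (2 * PI) z / 2.

Definition inD (z : R) : Prop := 0 < z < Rpower 3 (- (1/3)).

Definition simple_zero (f : R -> R) (z : R) : Prop :=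
  f z = 0 /\ ex_derive f z /\ Derive f z <> 0.

Definition nonzero_on_D (f : R -> R) : Prop := exists z, inD z /\ f z <> 0.
Definition zero_on_D (f : R -> R) : Prop := forall z, inD z -> f z = 0.

Definition at_most_simple_zeros (f : R -> R) (n : nat) : Prop :=
  forall l : list R, NoDup l -> (forall z, In z l -> inD z /\ simple_zero f z) ->
    (length l <= n)%nat.

Definition has_simple_zeros (f : R -> R) (n : nat) : Prop :=
  exists l : list R, NoDup l /\ length l = n /\
    (forall z, In z l -> inD z /\ simple_zero f z).

(* "the averaging method of order given by fj, over admissible coefficients Adm
   (which include f_1 = ... = f_{j-1} = 0), yields at most n limit cycles, and n is
   reached" *)
Definition averaging_yields_exactly (Adm : coeffs -> Prop) (fj : coeffs -> R -> R)
  (n : nat) : Prop :=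
  (forall C, Adm C -> nonzero_on_D (fj C) -> at_most_simple_zeros (fj C) n) /\
  (exists C, Adm C /\ nonzero_on_D (fj C) /\ has_simple_zeros (fj C) n).

Definition cond2 (C : coeffs) : Prop :=
  ca C 1 1 3 = cb C 1 0 4 /\ ca C 1 3 1 = cb C 1 2 2 /\
  cb C 1 4 0 = 0 /\ lam C 1 = 0 /\
  ca C 1 2 2 = cb C 1 1 3 /\ ca C 1 4 0 = cb C 1 3 1 /\ ca C 1 0 4 = 0.

Definition H1 (C : coeffs) : R :=
  3 * ca C 2 1 3 + ca C 2 3 1 - 3 * cb C 2 0 4 - cb C 2 2 2 - 3 * cb C 2 4 0
  + 72 * lam C 2.
Definition H2 (C : coeffs) : R :=
  -4 * ca C 2 1 3 + 4 * cb C 2 0 4 + 4 * ca C 2 3 1 - 4 * cb C 2 2 2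
  - 12 * cb C 2 4 0 + 288 * lam C 2.
Definition H3 (C : coeffs) : R :=
  5 * ca C 2 1 3 - 9 * ca C 2 3 1 - 5 * cb C 2 0 4 + 9 * cb C 2 2 2
  - 5 * cb C 2 4 0 + 504 * lam C 2.
Definition H4 (C : coeffs) : R :=
  -8 * ca C 2 1 3 + 8 * ca C 2 3 1 + 8 * cb C 2 0 4 - 8 * cb C 2 2 2
  + 40 * cb C 2 4 0 + 576 * lam C 2.

Definition zofs (s : R) : R := Rpower ((1 - s ^ 2) / (3 * (1 + s ^ 2))) (1/3).

Definition f2_formula (C : coeffs) (s : R) : R :=
  PI * Rpower 3 (2/3) * Rpower (1 - s) (1/3)
  / (108 * Rpower (1 + s) (11/3) * Rpower (1 + s ^ 2) (4/3))
  * (H1 C * s ^ 6 + H2 C * s ^ 5 + H3 C * s ^ 4 + H4 C * s ^ 3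
     + H3 C * s ^ 2 + H2 C * s + H1 C).

(* In polar coordinates dr/dtheta is r (n0 + e n1 + e^2 n2) / (d0 + e d1 + e^2 d2)
   with explicit trigonometric coefficients, so F_0, F_1, F_2 follow from the Taylor
   coefficients of such a ratio.  Along the unperturbed orbit r = z rho, Y = rho^4 with
   rho^3 = 1 / (1 - a sin s), a = 3 z^3, and the averaging integrand becomes
   lam z (1 - a sin s) + z^4 (radial form) - z^7 cos s (angular form) / (1 - a sin s).
   Partial fractions give explicit primitives, so both f_1 and (under cond2, where the
   first-order perturbation is purely radial) f_2 equal z Psi_k(3 z^3) with Psi_k explicit.
   The substitution a = (1 - s^2)/(1 + s^2) makes Psi_k a rational function of s whose
   numerator is a palindromic sextic, i.e. s^3 times a cubic in w = s + 1/s; since w is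
   injective on (0,1), there are at most three zeros unless Psi_k vanishes identically.
   A cubic with roots 3, 4, 5 shows the bound is attained, via a simple-zero criterion.
   The same substitution yields the paper's closed form of f_2. *)
From Stdlib Require Import Reals Lra Lia List Nsatz.
From Coquelicot Require Import Coquelicot.
Open Scope R_scope.

(* A ratio r (n0 + e n1 + e^2 n2) / (d0 + e d1 + e^2 d2) of quadratics in e:
   in polar coordinates dr/dtheta has exactly this shape as a function of eps. *)
Definition quad_ratio (r n0 n1 n2 d0 d1 d2 e : R) : R :=
  r * (n0 + e * n1 + e ^ 2 * n2) / (d0 + e * d1 + e ^ 2 * d2).

(* The denominator stays nonzero near e = 0, so derivatives at 0 may be computed
   from the pointwise formula. *)
Lemma quad_nonzero_near0 (d0 d1 d2 : R) : d0 <> 0 ->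
  locally 0 (fun e => d0 + e * d1 + e ^ 2 * d2 <> 0).
Proof.
  intros Hd.
  assert (Hc : continuous (fun e => d0 + e * d1 + e ^ 2 * d2) 0).
  { apply (ex_derive_continuous (K := R_AbsRing) (V := R_NormedModule)).
    auto_derive. exact I. }
  refine (Hc (fun y => y <> 0) _). replace (d0 + 0 * d1 + 0 ^ 2 * d2) with d0 by ring.
  apply (locally_interval _ d0 (d0 - Rabs d0) (d0 + Rabs d0));
    simpl; pose proof (Rabs_pos_lt d0 Hd); try lra.
  intros y H1 H2 ->. destruct (Rle_or_lt 0 d0).
  - rewrite Rabs_right in H1; lra.
  - rewrite Rabs_left in H2; lra.
Qed.

Lemma quad_ratio_derive r n0 n1 n2 d0 d1 d2 e : d0 + e * d1 + e ^ 2 * d2 <> 0 ->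
  is_derive (quad_ratio r n0 n1 n2 d0 d1 d2) e
    (r * ((n1 + 2 * e * n2) * (d0 + e * d1 + e ^ 2 * d2)
          - (n0 + e * n1 + e ^ 2 * n2) * (d1 + 2 * e * d2))
     / (d0 + e * d1 + e ^ 2 * d2) ^ 2).
Proof. intros H. unfold quad_ratio. auto_derive; [exact H | field; exact H]. Qed.

Lemma quad_ratio_taylor1 r n0 n1 n2 d0 d1 d2 : d0 <> 0 ->
  Derive_n (quad_ratio r n0 n1 n2 d0 d1 d2) 1 0 = r * (n1 * d0 - n0 * d1) / d0 ^ 2.
Proof.
  intros H. change (Derive (quad_ratio r n0 n1 n2 d0 d1 d2) 0 = r * (n1 * d0 - n0 * d1) / d0 ^ 2).
  rewrite (is_derive_unique _ _ _ (quad_ratio_derive r n0 n1 n2 d0 d1 d2 0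
    ltac:(replace (d0 + 0 * d1 + 0 ^ 2 * d2) with d0 by ring; exact H))).
  field. exact H.
Qed.

Lemma quad_ratio_taylor2 r n0 n1 n2 d0 d1 d2 : d0 <> 0 ->
  Derive_n (quad_ratio r n0 n1 n2 d0 d1 d2) 2 0 =
  2 * r * (n2 / d0 - (n1 * d1 + n0 * d2) / d0 ^ 2 + n0 * d1 ^ 2 / d0 ^ 3).
Proof.
  intros H. change (Derive (Derive (quad_ratio r n0 n1 n2 d0 d1 d2)) 0 =
    2 * r * (n2 / d0 - (n1 * d1 + n0 * d2) / d0 ^ 2 + n0 * d1 ^ 2 / d0 ^ 3)).
  rewrite (Derive_ext_loc _ (fun e => r * ((n1 + 2 * e * n2) * (d0 + e * d1 + e ^ 2 * d2)
      - (n0 + e * n1 + e ^ 2 * n2) * (d1 + 2 * e * d2)) / (d0 + e * d1 + e ^ 2 * d2) ^ 2)).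
  - apply is_derive_unique. auto_derive.
    + replace (d0 + 0 * d1 + 0 * (0 * 1) * d2) with d0 by ring.
      intros Hx; apply H; nra.
    + field. exact H.
  - apply (filter_imp _ _ (fun e He =>
      is_derive_unique _ _ _ (quad_ratio_derive r n0 n1 n2 d0 d1 d2 e He))).
    exact (quad_nonzero_near0 d0 d1 d2 H).
Qed.

Lemma cos2_sin2 th : cos th ^ 2 + sin th ^ 2 = 1.
Proof. rewrite <- !Rsqr_pow2, Rplus_comm. apply sin2_cos2. Qed.

(* Radial and angular parts of the order-k perturbation, divided by r^5, as quintic
   forms in (c, S) = (cos th, sin th). *)
Definition radial_form (C : coeffs) k c S :=
  cb C k 0 4 * S ^ 5 + (ca C k 0 4 + cb C k 1 3) * c * S ^ 4
  + (ca C k 1 3 + cb C k 2 2) * c ^ 2 * S ^ 3 + (ca C k 2 2 + cb C k 3 1) * c ^ 3 * S ^ 2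
  + (ca C k 3 1 + cb C k 4 0) * c ^ 4 * S + ca C k 4 0 * c ^ 5.

Definition ang0 (C : coeffs) k := cb C k 4 0.
Definition ang1 (C : coeffs) k := cb C k 3 1 - ca C k 4 0.
Definition ang2 (C : coeffs) k := cb C k 2 2 - ca C k 3 1.
Definition ang3 (C : coeffs) k := cb C k 1 3 - ca C k 2 2.
Definition ang4 (C : coeffs) k := cb C k 0 4 - ca C k 1 3.
Definition ang5 (C : coeffs) k := - ca C k 0 4.

Definition angular_form (C : coeffs) k c S :=
  ang0 C k * c ^ 5 + ang1 C k * c ^ 4 * S + ang2 C k * c ^ 3 * S ^ 2
  + ang3 C k * c ^ 2 * S ^ 3 + ang4 C k * c * S ^ 4 + ang5 C k * S ^ 5.

Lemma radial_identity C k th r :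
  r * cos th * Pk C k (r * cos th) (r * sin th) + r * sin th * Qk C k (r * cos th) (r * sin th)
  = lam C k * r ^ 2 + r ^ 5 * radial_form C k (cos th) (sin th).
Proof.
  generalize (cos2_sin2 th). unfold Pk, Qk, quartic, radial_form.
  generalize (cos th) (sin th). intros c S H. simpl in *. nsatz.
Qed.

Lemma angular_identity C k th r :
  r * cos th * Qk C k (r * cos th) (r * sin th) - r * sin th * Pk C k (r * cos th) (r * sin th)
  = r ^ 5 * angular_form C k (cos th) (sin th).
Proof.
  unfold Pk, Qk, quartic, angular_form, ang0, ang1, ang2, ang3, ang4, ang5. simpl. ring.
Qed.

Lemma unperturbed_identities th r :
  let x := r * cos th in let y := r * sin th in
  x * (- y + x * (x ^ 3 + x * y ^ 2)) + y * (x + y * (x ^ 3 + x * y ^ 2)) = r ^ 5 * cos th /\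
  x * (x + y * (x ^ 3 + x * y ^ 2)) - y * (- y + x * (x ^ 3 + x * y ^ 2)) = r ^ 2.
Proof.
  generalize (cos2_sin2 th). simpl. generalize (cos th) (sin th). intros c S H.
  split; nsatz.
Qed.

Lemma drdth_quad_ratio C th r e : r <> 0 ->
  drdth C th r e =
  quad_ratio r (r ^ 5 * cos th)
    (lam C 1 * r ^ 2 + r ^ 5 * radial_form C 1 (cos th) (sin th))
    (lam C 2 * r ^ 2 + r ^ 5 * radial_form C 2 (cos th) (sin th))
    (r ^ 2) (r ^ 5 * angular_form C 1 (cos th) (sin th))
    (r ^ 5 * angular_form C 2 (cos th) (sin th)) e.
Proof.
  intros Hr. pose proof (unperturbed_identities th r) as Hu. cbv zeta in Hu.
  destruct Hu as [Hrad Hang].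
  set (N := r ^ 5 * cos th + e * (lam C 1 * r ^ 2 + r ^ 5 * radial_form C 1 (cos th) (sin th))
            + e ^ 2 * (lam C 2 * r ^ 2 + r ^ 5 * radial_form C 2 (cos th) (sin th))).
  set (D := r ^ 2 + e * (r ^ 5 * angular_form C 1 (cos th) (sin th))
            + e ^ 2 * (r ^ 5 * angular_form C 2 (cos th) (sin th))).
  assert (EN : r * cos th * xdot C e (r * cos th) (r * sin th)
               + r * sin th * ydot C e (r * cos th) (r * sin th) = N).
  { unfold N. rewrite <- !radial_identity, <- Hrad. unfold xdot, ydot. ring. }
  assert (ED : r * cos th * ydot C e (r * cos th) (r * sin th)
               - r * sin th * xdot C e (r * cos th) (r * sin th) = D).
  { unfold D. rewrite <- !angular_identity, <- Hang. unfold xdot, ydot. ring. }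
  unfold drdth, quad_ratio. cbv zeta. rewrite EN, ED. fold N D.
  unfold Rdiv. rewrite Rinv_mult, Rinv_inv.
  replace (N * / r * (/ D * r ^ 2)) with (N * / D * (r * (r * / r))) by ring.
  rewrite Rinv_r by exact Hr. ring.
Qed.

(* The order-k term F_k of dr/dtheta (for k = 1, and for k = 2 once the first-order
   angular form vanishes). *)
Definition Fpert (C : coeffs) k th r :=
  lam C k * r + r ^ 4 * radial_form C k (cos th) (sin th)
  - r ^ 7 * cos th * angular_form C k (cos th) (sin th).

Lemma Fk_quad_ratio C k th r : r <> 0 ->
  Fk C k th r =
  Derive_n (quad_ratio r (r ^ 5 * cos th)
    (lam C 1 * r ^ 2 + r ^ 5 * radial_form C 1 (cos th) (sin th))
    (lam C 2 * r ^ 2 + r ^ 5 * radial_form C 2 (cos th) (sin th))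
    (r ^ 2) (r ^ 5 * angular_form C 1 (cos th) (sin th))
    (r ^ 5 * angular_form C 2 (cos th) (sin th))) k 0 / INR (Factorial.fact k).
Proof.
  intros Hr. unfold Fk. f_equal. apply Derive_n_ext. intro e. now apply drdth_quad_ratio.
Qed.

Lemma F0_closed C th r : r <> 0 -> Fk C 0 th r = r ^ 4 * cos th.
Proof. intros Hr. rewrite Fk_quad_ratio by exact Hr. simpl. unfold quad_ratio. field. exact Hr. Qed.

Lemma F1_closed C th r : r <> 0 -> Fk C 1 th r = Fpert C 1 th r.
Proof.
  intros Hr. rewrite Fk_quad_ratio, quad_ratio_taylor1 by (try apply pow_nonzero; exact Hr).
  unfold Fpert. simpl. field. exact Hr.
Qed.

Lemma F2_closed C th r : r <> 0 -> angular_form C 1 (cos th) (sin th) = 0 ->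
  Fk C 2 th r = Fpert C 2 th r.
Proof.
  intros Hr Hang. rewrite Fk_quad_ratio, quad_ratio_taylor2 by (try apply pow_nonzero; exact Hr).
  rewrite Hang. unfold Fpert. simpl. field. exact Hr.
Qed.

Lemma positive_near r0 : 0 < r0 -> locally r0 (fun r => 0 < r).
Proof.
  intros H. apply (locally_interval _ r0 0 (r0 + 1)); simpl; try lra. now intros y Hy _.
Qed.

Lemma F0_second_derivative C s r0 : 0 < r0 ->
  Derive_n (fun r => Fk C 0 s r) 2 r0 = 12 * r0 ^ 2 * cos s.
Proof.
  intros H. rewrite (Derive_n_ext_loc _ (fun r => r ^ 4 * cos s)).
  - apply is_derive_n_unique. apply is_derive_n_scal_r.
    replace (12 * r0 ^ 2) with
      (INR (Factorial.fact 4) / INR (Factorial.fact (4 - 2)) * r0 ^ (4 - 2)) by (simpl; field).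
    apply is_derive_n_pow_smalli. lia.
  - apply (filter_imp (fun r => 0 < r)); [intros r Hr; apply F0_closed; lra | now apply positive_near].
Qed.

Lemma F1_derivative C s r0 : 0 < r0 -> Derive (fun r => Fk C 1 s r) r0 =
  lam C 1 + 4 * r0 ^ 3 * radial_form C 1 (cos s) (sin s)
  - 7 * r0 ^ 6 * cos s * angular_form C 1 (cos s) (sin s).
Proof.
  intros H. rewrite (Derive_ext_loc _ (Fpert C 1 s)).
  - apply is_derive_unique. unfold Fpert. auto_derive; [exact I | ring].
  - apply (filter_imp (fun r => 0 < r)); [intros r Hr; apply F1_closed; lra | now apply positive_near].
Qed.

(* Along the unperturbed orbit through (z, 0) put a = 3 z^3: then
   r = z rho and Y = rho^4 with rho^3 = 1 / (1 - a sin s). *)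
Definition rho (s z : R) : R := Rpower (1 - 3 * z ^ 3 * sin s) (- (1 / 3)).

Lemma denominator_pos a s : 0 < a < 1 -> 0 < 1 - a * sin s.
Proof. intros Ha. pose proof (SIN_bound s). nra. Qed.

Lemma orbit_parameter z : 0 < z -> 3 * z ^ 3 < 1 -> 0 < 3 * z ^ 3 < 1.
Proof. intros Hz H3. pose proof (pow_lt z 3 Hz). lra. Qed.

Lemma rho_pos s z : 0 < rho s z.
Proof. apply exp_pos. Qed.

Lemma rsol_rho s z : rsol s z = z * rho s z.
Proof. reflexivity. Qed.

Lemma Ysol_rho s z : Ysol s z = rho s z ^ 4.
Proof.
  rewrite <- (Rpower_pow 4 _ (rho_pos s z)). unfold Ysol, rho. rewrite Rpower_mult.
  f_equal. simpl. field.
Qed.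

Lemma rho_cube s z : 0 < z -> 3 * z ^ 3 < 1 -> rho s z ^ 3 = / (1 - 3 * z ^ 3 * sin s).
Proof.
  intros Hz H3. rewrite <- (Rpower_pow 3 _ (rho_pos s z)). unfold rho. rewrite Rpower_mult.
  replace (- (1 / 3) * INR 3) with (- (1)) by (simpl; field).
  rewrite Rpower_Ropp, Rpower_1; [reflexivity|].
  apply denominator_pos, orbit_parameter; assumption.
Qed.

Definition avg_integrand (C : coeffs) k z a s :=
  lam C k * z * (1 - a * sin s) + z ^ 4 * radial_form C k (cos s) (sin s)
  - z ^ 7 * cos s * angular_form C k (cos s) (sin s) / (1 - a * sin s).

Lemma Fpert_on_orbit C k s z : 0 < z -> 3 * z ^ 3 < 1 ->
  / rho s z ^ 4 * Fpert C k s (z * rho s z) = avg_integrand C k z (3 * z ^ 3) s.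
Proof.
  intros Hz H3.
  assert (Hw : 1 - 3 * z ^ 3 * sin s = / rho s z ^ 3) by (rewrite rho_cube, Rinv_inv; auto).
  assert (Hr0 : rho s z <> 0) by (apply Rgt_not_eq, rho_pos).
  unfold avg_integrand, Fpert. rewrite Hw. field. exact Hr0.
Qed.

Lemma first_order_integrand C s z : 0 < z -> 3 * z ^ 3 < 1 ->
  / Ysol s z * Fk C 1 s (rsol s z) = avg_integrand C 1 z (3 * z ^ 3) s.
Proof.
  intros Hz H3. rewrite Ysol_rho, rsol_rho, F1_closed.
  - now apply Fpert_on_orbit.
  - apply Rgt_not_eq, Rmult_lt_0_compat; [exact Hz | apply rho_pos].
Qed.

(* Rational parametrization of the unit circle; it turns trigonometric identities
   into identities of rational functions, decided by field. *)
Lemma circle_param c S : c ^ 2 + S ^ 2 = 1 ->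
  (c = -1 /\ S = 0) \/ (exists t, c = (1 - t ^ 2) / (1 + t ^ 2) /\ S = 2 * t / (1 + t ^ 2)).
Proof.
  intros H. destruct (Req_dec c (-1)) as [E|E].
  - left. split; [exact E | subst; nra].
  - right. exists (S / (1 + c)).
    assert (Hc : 1 + c <> 0) by lra.
    assert (Hd : 1 + (S / (1 + c)) ^ 2 = 2 / (1 + c)).
    { replace (1 + (S / (1 + c)) ^ 2) with ((1 + 2 * c + (c ^ 2 + S ^ 2)) / (1 + c) ^ 2)
        by (field; exact Hc).
      rewrite H. field. exact Hc. }
    rewrite Hd. split; [replace ((S / (1 + c)) ^ 2) with (2 / (1 + c) - 1) by lra|]; field; exact Hc.
Qed.

Lemma cos_sq s : cos s ^ 2 = 1 - sin s ^ 2.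
Proof. pose proof (cos2_sin2 s). lra. Qed.

Lemma is_derive_eq (f : R -> R) (x l l' : R) : is_derive f x l -> @eq R l l' -> is_derive f x l'.
Proof. now intros H <-. Qed.

Definition radial_primitive (C : coeffs) k s :=
  let c := cos s in let S := sin s in
  cb C k 0 4 * (- (c - 2 * c ^ 3 / 3 + c ^ 5 / 5)) + (ca C k 0 4 + cb C k 1 3) * (S ^ 5 / 5)
  + (ca C k 1 3 + cb C k 2 2) * (- (c ^ 3 / 3 - c ^ 5 / 5))
  + (ca C k 2 2 + cb C k 3 1) * (S ^ 3 / 3 - S ^ 5 / 5)
  + (ca C k 3 1 + cb C k 4 0) * (- c ^ 5 / 5) + ca C k 4 0 * (S - 2 * S ^ 3 / 3 + S ^ 5 / 5).

Lemma radial_primitive_derive C k s :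
  is_derive (radial_primitive C k) s (radial_form C k (cos s) (sin s)).
Proof.
  unfold radial_primitive. auto_derive; [exact I|].
  generalize (cos2_sin2 s). unfold radial_form. generalize (cos s) (sin s). intros c S H.
  destruct (circle_param c S H) as [[-> ->]|[t [-> ->]]]; [ring | field; nra].
Qed.

Lemma radial_primitive_period C k : radial_primitive C k (2 * PI) = radial_primitive C k 0.
Proof. unfold radial_primitive. rewrite cos_2PI, sin_2PI, cos_0, sin_0. reflexivity. Qed.

(* For 0 < a < 1, Phi a is a primitive of sqrt(1 - a^2) / (1 - a sin s) that increases
   by exactly 2 pi over a period. *)
Definition sqrt1m (a : R) := sqrt (1 - a ^ 2).
Definition beta a := a / (1 + sqrt1m a).
Definition Phi a s := s - 2 * atan (beta a * cos s / (1 - beta a * sin s)).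

Lemma sqrt1m_facts a : 0 < a < 1 -> 0 < sqrt1m a /\ sqrt1m a ^ 2 = 1 - a ^ 2.
Proof.
  intros Ha. unfold sqrt1m. split.
  - apply sqrt_lt_R0. nra.
  - rewrite <- Rsqr_pow2. apply Rsqr_sqrt. nra.
Qed.

Lemma beta_bounds a : 0 < a < 1 -> 0 < beta a < 1.
Proof.
  intros Ha. destruct (sqrt1m_facts a Ha) as [H1 H2]. unfold beta.
  split; [apply Rdiv_lt_0_compat; lra|].
  apply Rmult_lt_reg_r with (1 + sqrt1m a); [lra|].
  unfold Rdiv. rewrite Rmult_assoc, Rinv_l by lra. lra.
Qed.

(* The algebraic core of Phi', stated on the raw derivative produced by auto_derive,
   with b = sqrt(1 - a^2) and be = a / (1 + b). *)
Lemma Phi_derivative_identity a b be c S : 0 < a < 1 -> 0 < b -> b ^ 2 = 1 - a ^ 2 ->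
  be * (1 + b) = a -> 0 < be < 1 -> c ^ 2 + S ^ 2 = 1 -> -1 <= S <= 1 ->
  1 + - (2 * ((be * (1 * - S) * / (1 + - (be * S)) +
     be * c * (- - (be * (1 * c)) * / ((1 + - (be * S)) * (1 + - (be * S))))) *
    / (1 + be * c * / (1 + - (be * S)) * (be * c * / (1 + - (be * S)) * 1)))) =
  b / (1 - a * S).
Proof.
  intros Ha Hb Hb2 Hbe Hbe1 Htr HS.
  assert (H1 : 0 < 1 - be * S) by nra.
  assert (H3 : 0 < 1 + be ^ 2 - 2 * be * S) by nra.
  assert (H4 : 0 < 1 - a * S) by nra.
  assert (H5 : (1 - be * S) ^ 2 + be ^ 2 * c ^ 2 = 1 + be ^ 2 - 2 * be * S)
    by (replace (c ^ 2) with (1 - S ^ 2) by lra; ring).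
  transitivity (1 - 2 * be * (be * c ^ 2 - S * (1 - be * S)) / ((1 - be * S) ^ 2 + be ^ 2 * c ^ 2)).
  { field. split; nra. }
  rewrite H5. replace (c ^ 2) with (1 - S ^ 2) by lra.
  assert (Hbe2 : be ^ 2 * (1 + b) = 1 - b).
  { apply Rmult_eq_reg_r with (1 + b); [|lra].
    replace (be ^ 2 * (1 + b) * (1 + b)) with ((be * (1 + b)) ^ 2) by ring. rewrite Hbe. nra. }
  subst a.
  transitivity ((1 - be ^ 2) / (1 + be ^ 2 - 2 * be * S)); [field; lra|].
  assert (K : (1 - be ^ 2) * (1 - be * (1 + b) * S) * (1 + b)
              = b * (1 + be ^ 2 - 2 * be * S) * (1 + b)).
  { replace ((1 - be ^ 2) * (1 - be * (1 + b) * S) * (1 + b))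
      with (((1 + b) - be ^ 2 * (1 + b)) * (1 - be * (1 + b) * S)) by ring.
    rewrite Hbe2.
    replace (b * (1 + be ^ 2 - 2 * be * S) * (1 + b))
      with (b * ((1 + b) + be ^ 2 * (1 + b) - 2 * be * (1 + b) * S)) by ring.
    rewrite Hbe2. ring. }
  apply Rmult_eq_reg_r in K; [|lra].
  replace (b / (1 - be * (1 + b) * S)) with
    ((1 - be ^ 2) * (1 - be * (1 + b) * S) / ((1 + be ^ 2 - 2 * be * S) * (1 - be * (1 + b) * S))).
  - field. split; lra.
  - rewrite K. field. split; lra.
Qed.

Lemma Phi_derive a s : 0 < a < 1 -> is_derive (Phi a) s (sqrt1m a / (1 - a * sin s)).
Proof.
  intros Ha. destruct (sqrt1m_facts a Ha) as [Hb1 Hb2]. destruct (beta_bounds a Ha) as [Hb3 Hb4].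
  pose proof (SIN_bound s). pose proof (cos2_sin2 s).
  assert (H1 : 0 < 1 - beta a * sin s) by nra.
  unfold Phi. auto_derive; [lra|].
  apply Phi_derivative_identity; auto. unfold beta. field. lra.
Qed.

Definition even_primitive a q0 q1 q2 q3 q4 q5 kap s :=
  q0 * s + q1 * (- cos s) + q2 * ((s - sin s * cos s) / 2) + q3 * (- cos s + cos s ^ 3 / 3)
  + q4 * (3 * (s - sin s * cos s) / 8 - sin s ^ 3 * cos s / 4)
  + q5 * (- cos s + 2 * cos s ^ 3 / 3 - cos s ^ 5 / 5)
  + kap / sqrt1m a * Phi a s.

Lemma even_primitive_derive a q0 q1 q2 q3 q4 q5 kap s : 0 < a < 1 ->
  is_derive (even_primitive a q0 q1 q2 q3 q4 q5 kap) s
    (q0 + q1 * sin s + q2 * sin s ^ 2 + q3 * sin s ^ 3 + q4 * sin s ^ 4 + q5 * sin s ^ 5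
     + kap / (1 - a * sin s)).
Proof.
  intros Ha. destruct (sqrt1m_facts a Ha) as [Hb1 Hb2].
  pose proof (denominator_pos a s Ha) as H4.
  unfold even_primitive. auto_derive.
  { repeat split; auto. exists (sqrt1m a / (1 - a * sin s)). now apply Phi_derive. }
  replace (Derive (fun x => Phi a x) s) with (sqrt1m a / (1 - a * sin s))
    by (symmetry; apply is_derive_unique, Phi_derive, Ha).
  generalize (cos2_sin2 s). revert H4 Hb1. generalize (cos s) (sin s) (sqrt1m a).
  intros c S b H4 Hb1 H.
  destruct (circle_param c S H) as [[-> ->]|[t [-> ->]]]; [field; lra|].
  assert (Ht : 0 < 1 + t ^ 2) by nra.
  assert (0 < 1 + t ^ 2 - a * (2 * t)).
  { replace (1 + t ^ 2 - a * (2 * t)) with ((1 + t ^ 2) * (1 - a * (2 * t / (1 + t ^ 2))))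
      by (field; lra). nra. }
  field. repeat split; lra.
Qed.

Definition odd_primitive a q0 q1 q2 q3 q4 g s :=
  q0 * sin s + q1 * sin s ^ 2 / 2 + q2 * sin s ^ 3 / 3 + q3 * sin s ^ 4 / 4 + q4 * sin s ^ 5 / 5
  - g / a * ln (1 - a * sin s).

Lemma odd_primitive_derive a q0 q1 q2 q3 q4 g s : 0 < a < 1 ->
  is_derive (odd_primitive a q0 q1 q2 q3 q4 g) s
    (cos s * (q0 + q1 * sin s + q2 * sin s ^ 2 + q3 * sin s ^ 3 + q4 * sin s ^ 4
              + g / (1 - a * sin s))).
Proof.
  intros Ha. pose proof (denominator_pos a s Ha).
  unfold odd_primitive. auto_derive; [lra | field; lra].
Qed.

(* Over a period only the polynomial mean and the Phi term survive. *)
Definition period_value a q0 q2 q4 kap :=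
  2 * PI * q0 + PI * q2 + 3 * PI / 4 * q4 + 2 * PI * kap / sqrt1m a.

Lemma even_primitive_period a q0 q1 q2 q3 q4 q5 kap : 0 < a < 1 ->
  even_primitive a q0 q1 q2 q3 q4 q5 kap (2 * PI)
  = even_primitive a q0 q1 q2 q3 q4 q5 kap 0 + period_value a q0 q2 q4 kap.
Proof.
  intros Ha. destruct (sqrt1m_facts a Ha) as [Hb1 Hb2].
  unfold even_primitive, period_value, Phi. rewrite cos_2PI, sin_2PI, cos_0, sin_0. field. lra.
Qed.

Lemma odd_primitive_period a q0 q1 q2 q3 q4 g :
  odd_primitive a q0 q1 q2 q3 q4 g (2 * PI) = odd_primitive a q0 q1 q2 q3 q4 g 0.
Proof. unfold odd_primitive. rewrite sin_2PI, sin_0. reflexivity. Qed.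

(* Partial fractions: c^(6-j) S^j / (1 - a S) = q(S) + kap / (1 - a S) after c^2 = 1 - S^2. *)
Ltac partial_fractions :=
  match goal with
  | Ha : 0 < ?a < 1 |- context [sin ?s] =>
      pose proof (denominator_pos a s Ha); rewrite ?cos_sq; field; lra
  end.

Definition K0 a := even_primitive a (1/a^6 - 3/a^4 + 3/a^2) (1/a^5 - 3/a^3 + 3/a)
  (1/a^4 - 3/a^2) (1/a^3 - 3/a) (1/a^2) (1/a) (-1/a^6 + 3/a^4 - 3/a^2 + 1).
Definition K1 a := odd_primitive a (-1/a^5 + 2/a^3 - 1/a) (-1/a^4 + 2/a^2) (-1/a^3 + 2/a)
  (-1/a^2) (-1/a) (1/a^5 - 2/a^3 + 1/a).
Definition K2 a := even_primitive a (-1/a^6 + 2/a^4 - 1/a^2) (-1/a^5 + 2/a^3 - 1/a)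
  (-1/a^4 + 2/a^2) (-1/a^3 + 2/a) (-1/a^2) (-1/a) (1/a^6 - 2/a^4 + 1/a^2).
Definition K3 a := odd_primitive a (1/a^5 - 1/a^3) (1/a^4 - 1/a^2) (1/a^3 - 1/a) (1/a^2) (1/a)
  (-1/a^5 + 1/a^3).
Definition K4 a := even_primitive a (1/a^6 - 1/a^4) (1/a^5 - 1/a^3) (1/a^4 - 1/a^2)
  (1/a^3 - 1/a) (1/a^2) (1/a) (-1/a^6 + 1/a^4).
Definition K5 a := odd_primitive a (-1/a^5) (-1/a^4) (-1/a^3) (-1/a^2) (-1/a) (1/a^5).

Lemma K0_derive a s : 0 < a < 1 -> is_derive (K0 a) s ((cos s ^ 2) ^ 3 / (1 - a * sin s)).
Proof. intros Ha. eapply is_derive_eq; [apply even_primitive_derive, Ha | partial_fractions]. Qed.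
Lemma K1_derive a s : 0 < a < 1 ->
  is_derive (K1 a) s (cos s * (cos s ^ 2) ^ 2 * sin s / (1 - a * sin s)).
Proof. intros Ha. eapply is_derive_eq; [apply odd_primitive_derive, Ha | partial_fractions]. Qed.
Lemma K2_derive a s : 0 < a < 1 ->
  is_derive (K2 a) s ((cos s ^ 2) ^ 2 * sin s ^ 2 / (1 - a * sin s)).
Proof. intros Ha. eapply is_derive_eq; [apply even_primitive_derive, Ha | partial_fractions]. Qed.
Lemma K3_derive a s : 0 < a < 1 ->
  is_derive (K3 a) s (cos s * cos s ^ 2 * sin s ^ 3 / (1 - a * sin s)).
Proof. intros Ha. eapply is_derive_eq; [apply odd_primitive_derive, Ha | partial_fractions]. Qed.
Lemma K4_derive a s : 0 < a < 1 -> is_derive (K4 a) s (cos s ^ 2 * sin s ^ 4 / (1 - a * sin s)).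
Proof. intros Ha. eapply is_derive_eq; [apply even_primitive_derive, Ha | partial_fractions]. Qed.
Lemma K5_derive a s : 0 < a < 1 -> is_derive (K5 a) s (cos s * sin s ^ 5 / (1 - a * sin s)).
Proof. intros Ha. eapply is_derive_eq; [apply odd_primitive_derive, Ha | partial_fractions]. Qed.

Definition angular_primitive (C : coeffs) k a s :=
  ang0 C k * K0 a s + ang1 C k * K1 a s + ang2 C k * K2 a s + ang3 C k * K3 a s
  + ang4 C k * K4 a s + ang5 C k * K5 a s.

Definition avg_primitive (C : coeffs) k z a s :=
  lam C k * z * (s + a * cos s) + z ^ 4 * radial_primitive C k s - z ^ 7 * angular_primitive C k a s.

Lemma avg_primitive_derive C k z a s : 0 < a < 1 ->
  is_derive (avg_primitive C k z a) s (avg_integrand C k z a s).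
Proof.
  intros Ha. pose proof (denominator_pos a s Ha).
  unfold avg_primitive, angular_primitive. auto_derive.
  { repeat split; try exact I;
    [ eexists; apply radial_primitive_derive | eexists; apply K0_derive; exact Ha
    | eexists; apply K1_derive; exact Ha | eexists; apply K2_derive; exact Ha
    | eexists; apply K3_derive; exact Ha | eexists; apply K4_derive; exact Ha
    | eexists; apply K5_derive; exact Ha ]. }
  rewrite (is_derive_unique (fun x : R => radial_primitive C k x) _ _ (radial_primitive_derive C k s)),
    (is_derive_unique (fun x : R => K0 a x) _ _ (K0_derive a s Ha)),
    (is_derive_unique (fun x : R => K1 a x) _ _ (K1_derive a s Ha)),
    (is_derive_unique (fun x : R => K2 a x) _ _ (K2_derive a s Ha)),
    (is_derive_unique (fun x : R => K3 a x) _ _ (K3_derive a s Ha)),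
    (is_derive_unique (fun x : R => K4 a x) _ _ (K4_derive a s Ha)),
    (is_derive_unique (fun x : R => K5 a x) _ _ (K5_derive a s Ha)).
  unfold avg_integrand, angular_form. field. lra.
Qed.

Lemma RInt_primitive (F f : R -> R) a b :
  (forall x, is_derive F x (f x)) -> (forall x, continuous f x) -> RInt f a b = F b - F a.
Proof.
  intros HF Hf. apply is_RInt_unique. apply (is_RInt_derive F f); intros x _; auto.
Qed.

(* The mean of the angular part over a period (only the even-in-cos monomials count). *)
Definition angular_mean (C : coeffs) k a :=
  ang0 C k * period_value a (1/a^6 - 3/a^4 + 3/a^2) (1/a^4 - 3/a^2) (1/a^2) (-1/a^6 + 3/a^4 - 3/a^2 + 1)
  + ang2 C k * period_value a (-1/a^6 + 2/a^4 - 1/a^2) (-1/a^4 + 2/a^2) (-1/a^2) (1/a^6 - 2/a^4 + 1/a^2)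
  + ang4 C k * period_value a (1/a^6 - 1/a^4) (1/a^4 - 1/a^2) (1/a^2) (-1/a^6 + 1/a^4).

Lemma avg_primitive_period C k z a : 0 < a < 1 ->
  avg_primitive C k z a (2 * PI) - avg_primitive C k z a 0
  = 2 * PI * lam C k * z - z ^ 7 * angular_mean C k a.
Proof.
  intros Ha. unfold avg_primitive, angular_primitive, angular_mean.
  rewrite radial_primitive_period, cos_2PI, cos_0.
  unfold K0, K1, K2, K3, K4, K5. rewrite !odd_primitive_period, !even_primitive_period by exact Ha.
  ring.
Qed.

Lemma avg_integrand_continuous C k z a x : 0 < a < 1 -> continuous (avg_integrand C k z a) x.
Proof.
  intros Ha. pose proof (denominator_pos a x Ha).
  apply (ex_derive_continuous (K := R_AbsRing) (V := R_NormedModule)).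
  unfold avg_integrand, radial_form, angular_form. auto_derive. lra.
Qed.

Lemma Ysol_period z : Ysol (2 * PI) z = 1.
Proof.
  unfold Ysol, Rpower. rewrite sin_2PI.
  replace (1 - 3 * z ^ 3 * 0) with 1 by ring. rewrite ln_1, Rmult_0_r. apply exp_0.
Qed.

Lemma f1_closed C z : 0 < z -> 3 * z ^ 3 < 1 ->
  f1 C z = 2 * PI * lam C 1 * z - z ^ 7 * angular_mean C 1 (3 * z ^ 3).
Proof.
  intros Hz H3. pose proof (orbit_parameter z Hz H3) as Ha.
  unfold f1, y1. rewrite Ysol_period, Rmult_1_l.
  rewrite (RInt_ext _ (avg_integrand C 1 z (3 * z ^ 3))) by (intros; now apply first_order_integrand).
  rewrite (RInt_primitive (avg_primitive C 1 z (3 * z ^ 3))).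
  - now apply avg_primitive_period.
  - intros; now apply avg_primitive_derive.
  - intros; now apply avg_integrand_continuous.
Qed.

(* Under cond2 the first-order angular form and lambda_1 vanish: the first-order
   perturbation is purely radial, so y_1 is an explicit periodic function. *)
Lemma cond2_angular C c S : cond2 C -> angular_form C 1 c S = 0.
Proof.
  intros (H1 & H2 & H3 & H4 & H5 & H6 & H7).
  unfold angular_form, ang0, ang1, ang2, ang3, ang4, ang5. rewrite H1, H2, H3, H5, H6, H7. ring.
Qed.

Lemma cond2_lam C : cond2 C -> lam C 1 = 0.
Proof. now intros (_ & _ & _ & H & _). Qed.

Lemma radial_form_continuous C k x : continuous (fun u => radial_form C k (cos u) (sin u)) x.
Proof.
  apply (ex_derive_continuous (K := R_AbsRing) (V := R_NormedModule)).
  unfold radial_form. auto_derive. exact I.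
Qed.

Lemma y1_closed C z s : cond2 C -> 0 < z -> 3 * z ^ 3 < 1 ->
  y1 C s z = Ysol s z * (z ^ 4 * (radial_primitive C 1 s - radial_primitive C 1 0)).
Proof.
  intros Hc Hz H3. unfold y1.
  rewrite (RInt_ext _ (fun u => z ^ 4 * radial_form C 1 (cos u) (sin u))).
  - rewrite (RInt_primitive (fun u => z ^ 4 * radial_primitive C 1 u)); [ring| |].
    + intros x. apply is_derive_scal, radial_primitive_derive.
    + intros x. apply (continuous_scal_r (K := R_AbsRing) (V := R_NormedModule)).
      apply radial_form_continuous.
  - intros x _.
    change (@eq R (/ Ysol x z * Fk C 1 x (rsol x z)) (z ^ 4 * radial_form C 1 (cos x) (sin x))).
    rewrite first_order_integrand by assumption. unfold avg_integrand.
    rewrite cond2_angular, cond2_lam by exact Hc.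
    pose proof (denominator_pos _ x (orbit_parameter z Hz H3)). field. lra.
Qed.

Definition second_order_integrand (C : coeffs) z a s :=
  2 * avg_integrand C 2 z a s
  + 4 * z ^ 7 * (2 * radial_form C 1 (cos s) (sin s)
                   * (radial_primitive C 1 s - radial_primitive C 1 0) / (1 - a * sin s)
                 + a * cos s * (radial_primitive C 1 s - radial_primitive C 1 0) ^ 2
                   / (1 - a * sin s) ^ 2).

Lemma second_order_integrand_eq C z s : cond2 C -> 0 < z -> 3 * z ^ 3 < 1 ->
  / Ysol s z * (2 * Fk C 2 s (rsol s z)
      + Derive_n (fun r => Fk C 0 s r) 2 (rsol s z) * (y1 C s z) ^ 2
      + 2 * Derive (fun r => Fk C 1 s r) (rsol s z) * y1 C s z)
  = second_order_integrand C z (3 * z ^ 3) s.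
Proof.
  intros Hc Hz H3.
  assert (Hr : 0 < rsol s z) by (apply Rmult_lt_0_compat; [lra | apply rho_pos]).
  rewrite y1_closed, F0_second_derivative, F1_derivative, F2_closed, Ysol_rho, rsol_rho
    by (auto; lra || now apply cond2_angular).
  rewrite cond2_angular, cond2_lam by exact Hc.
  unfold second_order_integrand. rewrite <- (Fpert_on_orbit C 2 s z Hz H3).
  assert (Hw : 1 - 3 * z ^ 3 * sin s = / rho s z ^ 3) by (rewrite rho_cube, Rinv_inv; auto).
  assert (Hr0 : rho s z <> 0) by (apply Rgt_not_eq, rho_pos).
  rewrite Hw. field. exact Hr0.
Qed.

Definition second_order_primitive (C : coeffs) z a s :=
  2 * avg_primitive C 2 z a s
  + 4 * z ^ 7 * (radial_primitive C 1 s - radial_primitive C 1 0) ^ 2 / (1 - a * sin s).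

Lemma second_order_primitive_derive C z a s : 0 < a < 1 ->
  is_derive (second_order_primitive C z a) s (second_order_integrand C z a s).
Proof.
  intros Ha. pose proof (denominator_pos a s Ha).
  unfold second_order_primitive. auto_derive.
  { repeat split; try exact I; try lra.
    - eexists. now apply avg_primitive_derive.
    - eexists. apply radial_primitive_derive. }
  rewrite (is_derive_unique (fun x : R => avg_primitive C 2 z a x) _ _
             (avg_primitive_derive C 2 z a s Ha)),
    (is_derive_unique (fun x : R => radial_primitive C 1 x) _ _ (radial_primitive_derive C 1 s)).
  unfold second_order_integrand. field. lra.
Qed.

Lemma second_order_integrand_continuous C z a x : 0 < a < 1 ->
  continuous (second_order_integrand C z a) x.
Proof.
  intros Ha. pose proof (denominator_pos a x Ha).
  apply (ex_derive_continuous (K := R_AbsRing) (V := R_NormedModule)).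
  unfold second_order_integrand, avg_integrand, radial_form, angular_form, radial_primitive.
  auto_derive. repeat split; try exact I; try lra.
  rewrite Rmult_1_r. apply Rmult_integral_contrapositive; split; lra.
Qed.

Lemma f2_closed C z : cond2 C -> 0 < z -> 3 * z ^ 3 < 1 ->
  f2 C z = 2 * PI * lam C 2 * z - z ^ 7 * angular_mean C 2 (3 * z ^ 3).
Proof.
  intros Hc Hz H3. pose proof (orbit_parameter z Hz H3) as Ha.
  unfold f2, y2. rewrite Ysol_period, Rmult_1_l.
  rewrite (RInt_ext _ (second_order_integrand C z (3 * z ^ 3)))
    by (intros; now apply second_order_integrand_eq).
  rewrite (RInt_primitive (second_order_primitive C z (3 * z ^ 3))).
  - rewrite <- avg_primitive_period by exact Ha. unfold second_order_primitive.
    rewrite radial_primitive_period, sin_2PI, sin_0. field.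
  - intros; now apply second_order_primitive_derive.
  - intros; now apply second_order_integrand_continuous.
Qed.

Definition Psi (C : coeffs) k a := 2 * PI * lam C k - a ^ 2 / 9 * angular_mean C k a.

Lemma cube_lt x y : 0 < x -> x < y -> x ^ 3 < y ^ 3.
Proof. intros Hx Hxy. assert (0 < y ^ 2 + x * y + x ^ 2) by nra. nra. Qed.

Lemma cube_root3_cube : Rpower 3 (- (1 / 3)) ^ 3 = / 3.
Proof.
  assert (Hq : 0 < Rpower 3 (- (1 / 3))) by apply exp_pos.
  rewrite <- (Rpower_pow 3 _ Hq), Rpower_mult.
  replace (- (1 / 3) * INR 3) with (- (1)) by (simpl; field).
  rewrite Rpower_Ropp, Rpower_1; lra.
Qed.

Lemma inD_iff z : inD z <-> 0 < z /\ 3 * z ^ 3 < 1.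
Proof.
  unfold inD. assert (Hq : 0 < Rpower 3 (- (1 / 3))) by apply exp_pos.
  pose proof cube_root3_cube as Hq3. split.
  - intros [H1 H2]. split; [exact H1|]. pose proof (cube_lt _ _ H1 H2). lra.
  - intros [H1 H2]. split; [exact H1|].
    destruct (Rlt_or_le z (Rpower 3 (- (1 / 3)))) as [h|h]; [exact h|].
    destruct h as [h|h]; [pose proof (cube_lt _ _ Hq h) | subst z]; lra.
Qed.

Lemma f1_Psi C z : inD z -> f1 C z = z * Psi C 1 (3 * z ^ 3).
Proof. intros [Hz H3]%inD_iff. rewrite f1_closed by assumption. unfold Psi. field. Qed.

Lemma f2_Psi C z : cond2 C -> inD z -> f2 C z = z * Psi C 2 (3 * z ^ 3).
Proof. intros Hc [Hz H3]%inD_iff. rewrite f2_closed by assumption. unfold Psi. field. Qed.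

(* The substitution a = (1 - s^2) / (1 + s^2), s in (0, 1), rationalizes sqrt(1 - a^2)
   and turns Psi_k into a palindromic sextic in s with the coefficients H_1..H_4. *)
Definition Hk1 (C : coeffs) k :=
  3 * ca C k 1 3 + ca C k 3 1 - 3 * cb C k 0 4 - cb C k 2 2 - 3 * cb C k 4 0 + 72 * lam C k.
Definition Hk2 (C : coeffs) k :=
  -4 * ca C k 1 3 + 4 * cb C k 0 4 + 4 * ca C k 3 1 - 4 * cb C k 2 2 - 12 * cb C k 4 0 + 288 * lam C k.
Definition Hk3 (C : coeffs) k :=
  5 * ca C k 1 3 - 9 * ca C k 3 1 - 5 * cb C k 0 4 + 9 * cb C k 2 2 - 5 * cb C k 4 0 + 504 * lam C k.
Definition Hk4 (C : coeffs) k :=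
  -8 * ca C k 1 3 + 8 * ca C k 3 1 + 8 * cb C k 0 4 - 8 * cb C k 2 2 + 40 * cb C k 4 0 + 576 * lam C k.

Definition sextic (C : coeffs) k s :=
  Hk1 C k * s ^ 6 + Hk2 C k * s ^ 5 + Hk3 C k * s ^ 4 + Hk4 C k * s ^ 3
  + Hk3 C k * s ^ 2 + Hk2 C k * s + Hk1 C k.

Definition sextic' (C : coeffs) k s :=
  6 * Hk1 C k * s ^ 5 + 5 * Hk2 C k * s ^ 4 + 4 * Hk3 C k * s ^ 3 + 3 * Hk4 C k * s ^ 2
  + 2 * Hk3 C k * s + Hk2 C k.

Definition a_of_s s := (1 - s ^ 2) / (1 + s ^ 2).

Definition Psi_s (C : coeffs) k s := PI * sextic C k s / (36 * (1 + s) ^ 4 * (1 + s ^ 2)).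

Lemma Psi_rational C k s : 0 < s < 1 -> Psi C k (a_of_s s) = Psi_s C k s.
Proof.
  intros Hs.
  assert (Hb : sqrt1m (a_of_s s) = 2 * s / (1 + s ^ 2)).
  { unfold sqrt1m, a_of_s.
    replace (1 - ((1 - s ^ 2) / (1 + s ^ 2)) ^ 2) with ((2 * s / (1 + s ^ 2)) ^ 2) by (field; nra).
    apply sqrt_pow2. apply Rlt_le, Rdiv_lt_0_compat; nra. }
  unfold Psi, angular_mean, period_value. rewrite Hb.
  unfold Psi_s, sextic, Hk1, Hk2, Hk3, Hk4, ang0, ang2, ang4, a_of_s.
  field. repeat split; nra.
Qed.

Lemma zofs_pos s : 0 < zofs s.
Proof. apply exp_pos. Qed.

Lemma zofs_a s : 0 < s < 1 -> 3 * zofs s ^ 3 = a_of_s s.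
Proof.
  intros Hs. rewrite <- (Rpower_pow 3 _ (zofs_pos s)). unfold zofs. rewrite Rpower_mult.
  replace (1 / 3 * INR 3) with 1 by (simpl; field). rewrite Rpower_1.
  - unfold a_of_s. field. nra.
  - apply Rdiv_lt_0_compat; nra.
Qed.

Lemma zofs_inD s : 0 < s < 1 -> inD (zofs s).
Proof.
  intros Hs. apply inD_iff. split; [apply zofs_pos|]. rewrite zofs_a by exact Hs. unfold a_of_s.
  apply Rmult_lt_reg_r with (1 + s ^ 2); [nra|].
  unfold Rdiv. rewrite Rmult_assoc, Rinv_l by nra. nra.
Qed.

Definition sofz z := sqrt ((1 - 3 * z ^ 3) / (1 + 3 * z ^ 3)).

Lemma sofz_facts z : inD z -> 0 < sofz z < 1 /\ a_of_s (sofz z) = 3 * z ^ 3.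
Proof.
  intros [Hz H3]%inD_iff. pose proof (pow_lt z 3 Hz).
  assert (Hq : 0 < (1 - 3 * z ^ 3) / (1 + 3 * z ^ 3)) by (apply Rdiv_lt_0_compat; lra).
  assert (Hq1 : (1 - 3 * z ^ 3) / (1 + 3 * z ^ 3) < 1).
  { apply Rmult_lt_reg_r with (1 + 3 * z ^ 3); [lra|].
    unfold Rdiv. rewrite Rmult_assoc, Rinv_l by lra. lra. }
  unfold sofz. repeat split.
  - now apply sqrt_lt_R0.
  - apply Rlt_le_trans with (sqrt 1); [apply sqrt_lt_1; lra | rewrite sqrt_1; lra].
  - unfold a_of_s. rewrite <- Rsqr_pow2, Rsqr_sqrt by lra. field. lra.
Qed.

Lemma sofz_zofs s : 0 < s < 1 -> sofz (zofs s) = s.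
Proof.
  intros Hs. unfold sofz. rewrite zofs_a by exact Hs. unfold a_of_s.
  replace ((1 - (1 - s ^ 2) / (1 + s ^ 2)) / (1 + (1 - s ^ 2) / (1 + s ^ 2))) with (s ^ 2)
    by (field; nra).
  apply sqrt_pow2. lra.
Qed.

Lemma Psi_at_sofz C k z : inD z -> z * Psi C k (3 * z ^ 3) = z * Psi_s C k (sofz z).
Proof.
  intros Hz. destruct (sofz_facts z Hz) as [Hs Ha]. now rewrite <- Ha, Psi_rational.
Qed.

Lemma f2_formula_Psi_s C s : 0 < s < 1 -> f2_formula C s = zofs s * Psi_s C 2 s.
Proof.
  intros Hs.
  assert (P1 : 0 < 1 - s) by lra. assert (P2 : 0 < 1 + s) by lra. assert (P3 : 0 < 1 + s ^ 2) by nra.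
  assert (PA : forall x y, 0 < Rpower x y) by (intros; apply exp_pos).
  assert (HK : Rpower 3 (2 / 3) * Rpower (1 - s) (1 / 3)
                / (Rpower (1 + s) (11 / 3) * Rpower (1 + s ^ 2) (4 / 3))
     = 3 * zofs s / ((1 + s) ^ 4 * (1 + s ^ 2))).
  { apply ln_inv.
    - apply Rdiv_lt_0_compat; apply Rmult_lt_0_compat; apply PA.
    - apply Rdiv_lt_0_compat; apply Rmult_lt_0_compat; try apply pow_lt; try apply zofs_pos; lra.
    - rewrite ln_div, !ln_mult, ln_div, !ln_mult; try apply pow_lt; try apply Rmult_lt_0_compat;
        try apply pow_lt; try apply zofs_pos; try apply PA; try lra.
      rewrite !ln_Rpower. unfold zofs. rewrite ln_Rpower, ln_pow, ln_div by (nra || lra).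
      rewrite (ln_mult 3) by lra. replace (1 - s ^ 2) with ((1 - s) * (1 + s)) by ring.
      rewrite (ln_mult (1 - s)) by lra. simpl INR. field. }
  unfold f2_formula, Psi_s, sextic, Hk1, Hk2, Hk3, Hk4, H1, H2, H3, H4.
  replace (PI * Rpower 3 (2 / 3) * Rpower (1 - s) (1 / 3) /
     (108 * Rpower (1 + s) (11 / 3) * Rpower (1 + s ^ 2) (4 / 3)))
   with (PI / 108 * (Rpower 3 (2 / 3) * Rpower (1 - s) (1 / 3) /
     (Rpower (1 + s) (11 / 3) * Rpower (1 + s ^ 2) (4 / 3))))
   by (field; split; apply Rgt_not_eq, PA).
  rewrite HK. field. nra.
Qed.

Definition cubic (C : coeffs) k w :=
  Hk1 C k * w ^ 3 + Hk2 C k * w ^ 2 + (Hk3 C k - 3 * Hk1 C k) * w + (Hk4 C k - 2 * Hk2 C k).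

Definition cubic' (C : coeffs) k w := 3 * Hk1 C k * w ^ 2 + 2 * Hk2 C k * w + (Hk3 C k - 3 * Hk1 C k).

Lemma sextic_cubic C k s : s <> 0 -> sextic C k s = s ^ 3 * cubic C k (s + / s).
Proof. intros. unfold sextic, cubic. field. assumption. Qed.

Lemma sextic'_cubic C k s : s <> 0 ->
  sextic' C k s = 3 * s ^ 2 * cubic C k (s + / s) + s * (s ^ 2 - 1) * cubic' C k (s + / s).
Proof. intros. unfold sextic', cubic, cubic'. field. assumption. Qed.

Lemma Psi_s_zero C k s : 0 < s < 1 -> Psi_s C k s = 0 -> cubic C k (s + / s) = 0.
Proof.
  intros Hs H. unfold Psi_s in H. rewrite sextic_cubic in H by lra.
  pose proof PI_RGT_0. pose proof (pow_lt s 3 (proj1 Hs)).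
  assert (0 < 36 * (1 + s) ^ 4 * (1 + s ^ 2)) by (pose proof (pow_lt (1 + s) 4 ltac:(lra)); nra).
  apply Rmult_integral in H as [H|H].
  - apply Rmult_integral in H as [H|H]; [lra|].
    apply Rmult_integral in H as [H|H]; [lra | exact H].
  - apply Rinv_neq_0_compat in H; [contradiction | lra].
Qed.

Lemma inv_sum_injective s t : 0 < s < 1 -> 0 < t < 1 -> s + / s = t + / t -> s = t.
Proof.
  intros Hs Ht E.
  assert (E2 : (s - t) * (s * t - 1) = 0).
  { apply (Rmult_eq_reg_r (/ (s * t))); [|apply Rinv_neq_0_compat; nra].
    rewrite Rmult_0_l. replace ((s - t) * (s * t - 1) * / (s * t)) with ((s + / s) - (t + / t))
      by (field; lra). lra. }
  apply Rmult_integral in E2 as [E2|E2]; nra.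
Qed.

Definition w_of_z z := sofz z + / sofz z.

Lemma w_of_z_injective z1 z2 : inD z1 -> inD z2 -> w_of_z z1 = w_of_z z2 -> z1 = z2.
Proof.
  intros H1 H2 E.
  destruct (sofz_facts _ H1) as [Hs1 A1], (sofz_facts _ H2) as [Hs2 A2].
  apply inv_sum_injective in E; [|assumption..].
  apply inD_iff in H1, H2. rewrite E in A1.
  destruct (Rtotal_order z1 z2) as [h|[h|h]]; [|exact h|].
  - pose proof (cube_lt z1 z2 (proj1 H1) h). lra.
  - pose proof (cube_lt z2 z1 (proj1 H2) h). lra.
Qed.

(* A polynomial of degree at most 3 with four distinct roots is zero: divided differences. *)
Lemma divide_out u v X Y Z : u <> v -> Y = 0 -> Z = 0 -> (u - v) * X = Y - Z -> X = 0.
Proof.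
  intros Huv HY HZ E. rewrite HY, HZ, Rminus_0_r in E.
  apply Rmult_integral in E as [H|H]; [lra | exact H].
Qed.

Lemma cubic_four_roots d0 d1 d2 d3 w1 w2 w3 w4 :
  w1 <> w2 -> w1 <> w3 -> w1 <> w4 -> w2 <> w3 -> w2 <> w4 -> w3 <> w4 ->
  (forall w, w = w1 \/ w = w2 \/ w = w3 \/ w = w4 -> d3 * w ^ 3 + d2 * w ^ 2 + d1 * w + d0 = 0) ->
  d0 = 0 /\ d1 = 0 /\ d2 = 0 /\ d3 = 0.
Proof.
  intros h12 h13 h14 h23 h24 h34 E.
  assert (A2 : d3 * (w1 ^ 2 + w1 * w2 + w2 ^ 2) + d2 * (w1 + w2) + d1 = 0)
    by (apply (divide_out w1 w2 _ _ _ h12 (E w1 ltac:(auto)) (E w2 ltac:(auto))); ring).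
  assert (A3 : d3 * (w1 ^ 2 + w1 * w3 + w3 ^ 2) + d2 * (w1 + w3) + d1 = 0)
    by (apply (divide_out w1 w3 _ _ _ h13 (E w1 ltac:(auto)) (E w3 ltac:(auto))); ring).
  assert (A4 : d3 * (w1 ^ 2 + w1 * w4 + w4 ^ 2) + d2 * (w1 + w4) + d1 = 0)
    by (apply (divide_out w1 w4 _ _ _ h14 (E w1 ltac:(auto)) (E w4 ltac:(auto))); ring).
  assert (B3 : d3 * (w1 + w2 + w3) + d2 = 0) by (apply (divide_out w2 w3 _ _ _ h23 A2 A3); ring).
  assert (B4 : d3 * (w1 + w2 + w4) + d2 = 0) by (apply (divide_out w2 w4 _ _ _ h24 A2 A4); ring).
  assert (D3 : d3 = 0) by (apply (divide_out w3 w4 _ _ _ h34 B3 B4); ring).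
  subst d3. assert (d2 = 0) by lra. subst d2. assert (d1 = 0) by lra. subst d1.
  specialize (E w1 ltac:(auto)). repeat split; lra.
Qed.

Section ZeroCounting.
Variables (F : R -> R) (C : coeffs) (k : nat).
Hypothesis HF : forall z, inD z -> F z = z * Psi C k (3 * z ^ 3).

Lemma zero_gives_cubic_root z : inD z -> F z = 0 -> cubic C k (w_of_z z) = 0.
Proof.
  intros Hz H0. destruct (sofz_facts z Hz) as [Hs _].
  apply Psi_s_zero; [exact Hs|].
  rewrite HF, Psi_at_sofz in H0 by exact Hz.
  apply Rmult_integral in H0 as [H0|H0]; [apply inD_iff in Hz; lra | exact H0].
Qed.

Lemma at_most_three_zeros : nonzero_on_D F -> at_most_simple_zeros F 3.
Proof.
  intros [z0 [Hz0 Hnz]] l Hnd Hl.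
  destruct (Compare_dec.le_lt_dec (length l) 3) as [h|h]; [exact h|exfalso].
  destruct l as [|z1 [|z2 [|z3 [|z4 l']]]]; simpl in h; try lia.
  assert (Hroot : forall z, In z (z1 :: z2 :: z3 :: z4 :: l') -> cubic C k (w_of_z z) = 0)
    by (intros z Hin; destruct (Hl z Hin) as [HD [HZ _]]; now apply zero_gives_cubic_root).
  assert (Hw : forall x y, In x (z1 :: z2 :: z3 :: z4 :: l') -> In y (z1 :: z2 :: z3 :: z4 :: l') ->
      x <> y -> w_of_z x <> w_of_z y)
    by (intros x y Hx Hy Hxy E; apply Hxy, w_of_z_injective; [apply Hl..|]; assumption).
  inversion Hnd as [|? ? N1 Hnd1]. inversion Hnd1 as [|? ? N2 Hnd2]. inversion Hnd2 as [|? ? N3 _].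
  simpl in N1, N2, N3.
  destruct (cubic_four_roots (Hk4 C k - 2 * Hk2 C k) (Hk3 C k - 3 * Hk1 C k) (Hk2 C k) (Hk1 C k)
      (w_of_z z1) (w_of_z z2) (w_of_z z3) (w_of_z z4)) as (e0 & e1 & e2 & e3);
    try (apply Hw; simpl; [tauto | tauto | intro E; subst; tauto]).
  { intros w Hwi. fold (cubic C k w).
    destruct Hwi as [E|[E|[E|E]]]; subst w; apply Hroot; simpl; tauto. }
  apply Hnz. rewrite HF, Psi_at_sofz by exact Hz0. unfold Psi_s, sextic.
  replace (Hk1 C k) with 0 by lra. replace (Hk2 C k) with 0 by lra.
  replace (Hk3 C k) with 0 by lra. replace (Hk4 C k) with 0 by lra.
  unfold Rdiv. ring.
Qed.

End ZeroCounting.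

Lemma simple_zero_local (F G : R -> R) z0 d :
  locally z0 (fun z => F z = G z) -> G z0 = 0 -> is_derive G z0 d -> d <> 0 -> simple_zero F z0.
Proof.
  intros Hloc HG0 HG Hd.
  assert (HFd : is_derive F z0 d)
    by (apply (is_derive_ext_loc G); [apply (filter_imp _ _ (fun z E => eq_sym E) Hloc) | exact HG]).
  repeat split.
  - rewrite <- HG0. exact (locally_singleton _ _ Hloc).
  - now exists d.
  - now rewrite (is_derive_unique _ _ _ HFd).
Qed.

Lemma cubic_substitution_derive (Psi0 : R -> R) z0 d : is_derive Psi0 (3 * z0 ^ 3) d ->
  is_derive (fun z => z * Psi0 (3 * z ^ 3)) z0 (Psi0 (3 * z0 ^ 3) + 9 * z0 ^ 3 * d).
Proof.
  intros H. eapply is_derive_eq.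
  - apply (is_derive_mult (fun z => z) (fun z => Psi0 (3 * z ^ 3))).
    + apply is_derive_id.
    + apply (is_derive_comp Psi0 (fun z => 3 * z ^ 3)); [exact H | auto_derive; reflexivity].
    + intros; apply Rmult_comm.
  - match goal with |- ?a = ?b => change (@eq R a b) end.
    unfold plus, mult, one, scal. simpl. unfold mult. simpl. ring.
Qed.

Lemma Psi_ex_derive C k a : 0 < a < 1 -> ex_derive (Psi C k) a.
Proof.
  intros Ha. pose proof (sqrt1m_facts a Ha) as [Hb _].
  unfold Psi, angular_mean, period_value. unfold sqrt1m in *.
  auto_derive. repeat split; try exact I.
  all: try (apply Rgt_not_eq, Hb); try nra.
  all: apply Rgt_not_eq; repeat apply Rmult_lt_0_compat; lra.
Qed.

Lemma a_of_s_derive s : is_derive a_of_s s (- 4 * s / (1 + s ^ 2) ^ 2).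
Proof. unfold a_of_s. auto_derive; [nra | field; nra]. Qed.

Lemma sextic_derive C k s : is_derive (sextic C k) s (sextic' C k s).
Proof. unfold sextic, sextic'. auto_derive; [exact I | ring]. Qed.

Lemma Psi_s_derive_at_root C k s0 : 0 < s0 < 1 -> sextic C k s0 = 0 ->
  is_derive (Psi_s C k) s0 (PI * sextic' C k s0 / (36 * (1 + s0) ^ 4 * (1 + s0 ^ 2))).
Proof.
  intros Hs H0. pose proof (pow_lt (1 + s0) 4 ltac:(lra)).
  unfold Psi_s. auto_derive.
  - repeat split; [eexists; apply sextic_derive | apply Rgt_not_eq; simpl in *; nra].
  - rewrite (is_derive_unique (fun x : R => sextic C k x) _ _ (sextic_derive C k s0)), H0.
    field. nra.
Qed.

Lemma Psi_derive_nonzero C k s0 d : 0 < s0 < 1 -> sextic C k s0 = 0 -> sextic' C k s0 <> 0 ->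
  is_derive (Psi C k) (a_of_s s0) d -> d <> 0.
Proof.
  intros Hs H0 H1 Hd ->.
  assert (Hchain : is_derive (Psi_s C k) s0 (scal (- 4 * s0 / (1 + s0 ^ 2) ^ 2) 0)).
  { apply (is_derive_ext_loc (fun s => Psi C k (a_of_s s))).
    - apply (locally_interval _ s0 0 1); simpl; try lra.
      intros s Hs0 Hs1. apply Psi_rational. lra.
    - exact (is_derive_comp (Psi C k) a_of_s s0 0 _ Hd (a_of_s_derive s0)). }
  pose proof (is_derive_unique _ _ _ Hchain) as E1.
  rewrite (is_derive_unique _ _ _ (Psi_s_derive_at_root C k s0 Hs H0)) in E1.
  change (scal (- 4 * s0 / (1 + s0 ^ 2) ^ 2) 0) with ((- 4 * s0 / (1 + s0 ^ 2) ^ 2) * 0) in E1.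
  rewrite Rmult_0_r in E1.
  pose proof PI_RGT_0. pose proof (pow_lt (1 + s0) 4 ltac:(lra)).
  apply H1. apply (Rmult_eq_reg_l (PI / (36 * (1 + s0) ^ 4 * (1 + s0 ^ 2)))).
  - rewrite Rmult_0_r, <- E1. field. nra.
  - apply Rgt_not_eq, Rdiv_lt_0_compat; nra.
Qed.

Lemma inD_locally z : inD z -> locally z inD.
Proof.
  intros Hz. apply (locally_interval _ z 0 (Rpower 3 (- (1 / 3)))); simpl; try apply Hz.
  intros y H1 H2. split; assumption.
Qed.

Lemma simple_zero_at (F : R -> R) C k s0 : (forall z, inD z -> F z = z * Psi C k (3 * z ^ 3)) ->
  0 < s0 < 1 -> sextic C k s0 = 0 -> sextic' C k s0 <> 0 -> simple_zero F (zofs s0).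
Proof.
  intros HF Hs H0 H1.
  pose proof (zofs_a s0 Hs) as Ha0.
  pose proof (zofs_inD s0 Hs) as Hz0. pose proof (proj1 (inD_iff _) Hz0) as [Hpos H3].
  assert (HPsi0 : Psi C k (3 * zofs s0 ^ 3) = 0).
  { rewrite Ha0, Psi_rational by exact Hs. unfold Psi_s. rewrite H0. unfold Rdiv. ring. }
  destruct (Psi_ex_derive C k (3 * zofs s0 ^ 3) (orbit_parameter _ Hpos H3)) as [d Hd].
  apply (simple_zero_local F (fun z => z * Psi C k (3 * z ^ 3)) _ _
           (filter_imp _ _ HF (inD_locally _ Hz0)) ltac:(cbv beta; rewrite HPsi0; ring)
           (cubic_substitution_derive _ _ _ Hd)).
  rewrite HPsi0, Rplus_0_l. pose proof (pow_lt _ 3 Hpos).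
  assert (d <> 0) by (rewrite Ha0 in Hd; exact (Psi_derive_nonzero C k s0 d Hs H0 H1 Hd)).
  apply Rmult_integral_contrapositive_currified; [lra | assumption].
Qed.

(* The bound 3 is attained: coefficients with cubic (w - 3)(w - 4)(w - 5), placed at order kk. *)
Definition example_b (i j : nat) : R :=
  match i, j with 4%nat, 0%nat => -15/16 | 2%nat, 2%nat => 37/8 | 0%nat, 4%nat => -1 | _, _ => 0 end.

Definition example (kk : nat) : coeffs :=
  mkCoeffs (fun k => if Nat.eqb k kk then -1/384 else 0) (fun _ _ _ => 0)
           (fun k i j => if Nat.eqb k kk then example_b i j else 0).

Lemma example_cubic kk w :
  cubic (example kk) kk w = (w - 3) * (w - 4) * (w - 5) /\
  cubic' (example kk) kk w = 3 * w ^ 2 - 24 * w + 47.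
Proof.
  unfold cubic, cubic', Hk1, Hk2, Hk3, Hk4, example. cbn. rewrite Nat.eqb_refl.
  unfold example_b. split; field.
Qed.

Lemma cond2_example : cond2 (example 2).
Proof. unfold cond2, example. cbn. repeat split; reflexivity. Qed.

Definition s_of_w w := (w - sqrt (w ^ 2 - 4)) / 2.

Lemma s_of_w_facts w : 2 < w -> 0 < s_of_w w < 1 /\ s_of_w w + / s_of_w w = w.
Proof.
  intros Hw. assert (Hr0 : 0 <= w ^ 2 - 4) by nra.
  pose proof (sqrt_pos (w ^ 2 - 4)) as H1. pose proof (sqrt_sqrt (w ^ 2 - 4) Hr0) as H2.
  set (r := sqrt (w ^ 2 - 4)) in *.
  assert (r < w) by nra. assert (w - 2 < r) by nra.
  unfold s_of_w. fold r. split; [split; lra|].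
  assert (E : ((w - r) / 2) ^ 2 - w * ((w - r) / 2) + 1 = 0).
  { replace (((w - r) / 2) ^ 2 - w * ((w - r) / 2) + 1) with ((r * r - (w ^ 2 - 4)) / 4) by field.
    rewrite H2. field. }
  apply (Rmult_eq_reg_r ((w - r) / 2)); [|lra].
  rewrite Rmult_plus_distr_r, Rinv_l by lra. nra.
Qed.

Lemma sextic'_nonzero C k s : 0 < s < 1 -> cubic C k (s + / s) = 0 -> cubic' C k (s + / s) <> 0 ->
  sextic' C k s <> 0.
Proof.
  intros Hs H0 H1. rewrite sextic'_cubic, H0 by lra. intros E.
  apply H1, (Rmult_eq_reg_l (s * (s ^ 2 - 1))); [lra|].
  apply Rmult_integral_contrapositive_currified; nra.
Qed.

Lemma example_three_zeros (F : R -> R) kk :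
  (forall z, inD z -> F z = z * Psi (example kk) kk (3 * z ^ 3)) ->
  nonzero_on_D F /\ has_simple_zeros F 3.
Proof.
  intros HF.
  assert (Hroot : forall w, 2 < w -> cubic (example kk) kk w = 0 -> cubic' (example kk) kk w <> 0 ->
            inD (zofs (s_of_w w)) /\ simple_zero F (zofs (s_of_w w))).
  { intros w Hw H0 H1. destruct (s_of_w_facts w Hw) as [Hs Hsw].
    split; [now apply zofs_inD|].
    apply (simple_zero_at F (example kk) kk); [exact HF | exact Hs | |].
    - rewrite sextic_cubic, Hsw, H0 by lra. ring.
    - apply sextic'_nonzero; [exact Hs | rewrite Hsw; assumption..]. }
  assert (Hw_of_z : forall w, 2 < w -> w_of_z (zofs (s_of_w w)) = w).
  { intros w Hw. destruct (s_of_w_facts w Hw) as [Hs Hsw]. unfold w_of_z. now rewrite sofz_zofs. }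
  assert (Hdist : forall u v, 2 < u -> 2 < v -> u <> v -> zofs (s_of_w u) <> zofs (s_of_w v)).
  { intros u v Hu Hv Huv E. apply Huv. now rewrite <- (Hw_of_z u Hu), <- (Hw_of_z v Hv), E. }
  split.
  - exists (zofs (1 / 2)). split; [apply zofs_inD; lra|].
    rewrite HF, Psi_at_sofz, sofz_zofs by (try apply zofs_inD; lra).
    unfold Psi_s. rewrite sextic_cubic by lra. rewrite (proj1 (example_cubic kk _)).
    pose proof (zofs_pos (1 / 2)). pose proof PI_RGT_0.
    replace (/ (1 / 2)) with 2 by field.
    apply Rmult_integral_contrapositive_currified; [lra|]. unfold Rdiv.
    apply Rmult_integral_contrapositive_currified; [|apply Rinv_neq_0_compat; nra].
    apply Rmult_integral_contrapositive_currified; [lra | simpl; lra].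
  - exists (zofs (s_of_w 3) :: zofs (s_of_w 4) :: zofs (s_of_w 5) :: nil).
    split; [|split; [reflexivity|]].
    + repeat apply NoDup_cons; try apply NoDup_nil; simpl; intros Hin;
        repeat (destruct Hin as [E|Hin]; [revert E; apply Hdist; lra|]); exact Hin.
    + intros z Hin. simpl in Hin.
      destruct Hin as [E|[E|[E|E]]]; try contradiction; subst z;
        apply Hroot; try lra; rewrite ?(proj1 (example_cubic kk _)), ?(proj2 (example_cubic kk _)); lra.
Qed.

Lemma cond2_f1_zero C : cond2 C -> zero_on_D (f1 C).
Proof.
  intros Hc z Hz. rewrite f1_Psi by exact Hz.
  destruct Hc as (H1 & H2 & H3 & H4 & _).
  unfold Psi, angular_mean, ang0, ang2, ang4. rewrite H1, H2, H3, H4. ring.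
Qed.

Theorem mainTheorem10 :
  averaging_yields_exactly (fun _ => True) f1 3 /\
  (forall C, cond2 C -> zero_on_D (f1 C)) /\
  averaging_yields_exactly (fun C => cond2 C /\ zero_on_D (f1 C)) f2 3 /\
  (forall C s, cond2 C -> 0 < s < 1 -> f2 C (zofs s) = f2_formula C s).
Proof.
  split; [|split; [|split]].
  - split.
    + intros C _. apply (at_most_three_zeros (f1 C) C 1), f1_Psi.
    + exists (example 1). split; [exact I|]. apply (example_three_zeros _ 1), f1_Psi.
  - exact cond2_f1_zero.
  - split.
    + intros C [Hc _]. apply (at_most_three_zeros (f2 C) C 2). intros z. now apply f2_Psi.
    + exists (example 2).
      split; [split; [exact cond2_example | exact (cond2_f1_zero _ cond2_example)]|].
      apply (example_three_zeros _ 2). intros z. apply f2_Psi, cond2_example.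
  - intros C s Hc Hs.
    rewrite f2_Psi, zofs_a, Psi_rational, f2_formula_Psi_s by (auto using zofs_inD).
    reflexivity.
Qed.
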